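(* There is no Abel universal function with Hadamard gaps; that is, no $f\in\mathcal{U}_A(\mathbb{D})$ has Hadamard gaps.
   Context: $\mathbb{D}$ is the open unit disc, $\mathbb{T}$ the unit circle. $\mathcal{U}_A(\mathbb{D})$ (the Abel universal functions) is the set of $f\in H(\mathbb{D})$ such that for every $\varepsilon>0$, every compact $K\subset\mathbb{T}$ with $K\ne\mathbb{T}$ and every continuous $\varphi$ on $K$, there is $r\in[0,1)$ with $\sup_{\zeta\in K}|f(r\zeta)-\varphi(\zeta)|\le\varepsilon$. A power series $f(z)=\sum_k a_kz^k$ with radius of convergence $1$ has Hadamard gaps if there is a sequence $(n_k)$ in $\mathbb{N}$ with $\inf_k n_{k+1}/n_k>1$ such that $a_j=0$ whenever $j\notin\{n_k:k\in\mathbb{N}\}$. *)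

From Stdlib Require Import Reals List.
From Coquelicot Require Import Coquelicot.
Open Scope R_scope.

Definition unit_disc (z : C) : Prop := Cmod z < 1.
Definition unit_circle (z : C) : Prop := Cmod z = 1.

Definition power_series_on_disc (a : nat -> C) (f : C -> C) : Prop :=
  forall z : C, unit_disc z ->
    is_series (fun k => Cmult (a k) (pow_n z k)) (f z).

Definition radius_of_convergence (a : nat -> C) : Rbar :=
  CV_radius (fun k => Cmod (a k)).

Definition compact_set (K : C -> Prop) : Prop :=
  forall (I : Type) (U : I -> C -> Prop),
    (forall i, open (U i)) ->
    (forall z, K z -> exists i, U i z) ->
    exists l : list I, forall z, K z -> exists i, In i l /\ U i z.

Definition continuous_on (K : C -> Prop) (phi : C -> C) : Prop :=
  forall zeta, K zeta -> forall eps : R, 0 < eps ->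
    exists delta : R, 0 < delta /\
      forall xi, K xi -> Cmod (Cminus xi zeta) < delta ->
        Cmod (Cminus (phi xi) (phi zeta)) < eps.

(* Abel universality of f (only values on the disc matter, since r < 1) *)
Definition abel_universal (f : C -> C) : Prop :=
  forall (eps : R), 0 < eps ->
  forall (K : C -> Prop),
    (forall z, K z -> unit_circle z) ->
    compact_set K ->
    (exists z, unit_circle z /\ ~ K z) ->
  forall (phi : C -> C), continuous_on K phi ->
    exists r : R, 0 <= r < 1 /\
      forall zeta, K zeta ->
        Cmod (Cminus (f (RtoC r * zeta)%C) (phi zeta)) <= eps.

Definition hadamard_gaps (a : nat -> C) : Prop :=
  radius_of_convergence a = Finite 1 /\
  exists (n : nat -> nat) (q : R), 1 < q /\
    (forall k, q * INR (n k) <= INR (n (S k))) /\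
    (forall j, (forall k, n k <> j) -> a j = RtoC 0).

From Stdlib Require Import Reals List Lra Lia Classical ClassicalEpsilon.
From Coquelicot Require Import Coquelicot.
Open Scope R_scope.

(* Take for K the closed upper half circle and for phi the constant
   M = 2 + sum_(m < n_k0) |a_m|; Abel universality gives r with |f(r e^(it)) - M| <= 1 for
   t in [0, PI].  Averaging t |-> f(r e^(it)) over the translates of 0 by all subset sums of
   shifts t_k = PI / n_k (k0 <= k <= N) keeps the average within 1 of M, since the gap
   condition gives sum t_k <= PI q / ((q - 1) n_k0) <= PI once n_k0 >= q / (q - 1).  On the
   power series side the averaging multiplies a_m r^m by prod_k (1 + e^(i m t_k)) / 2, which
   vanishes at every m = n_k, and the gap condition kills all other coefficients with
   n_k0 <= m <= n_N.  The average is therefore at most the head sum plus an arbitrarily small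
   tail, far below |M| - 1. *)

Definition cis (t : R) : C := (cos t, sin t).

Lemma cis_add (s t : R) : cis (s + t) = (cis s * cis t)%C.
Proof.
  unfold cis, Cmult; simpl; rewrite cos_plus, sin_plus; f_equal; ring.
Qed.

Lemma Cmod_cis (t : R) : Cmod (cis t) = 1.
Proof.
  unfold Cmod, cis; cbn [fst snd].
  replace (cos t ^ 2 + sin t ^ 2) with 1 by (rewrite <- (sin2_cos2 t); unfold Rsqr; ring).
  apply sqrt_1.
Qed.

Lemma cis_PI : cis PI = (- 1)%C.
Proof. unfold cis; rewrite cos_PI, sin_PI; apply injective_projections; simpl; ring. Qed.

Lemma pow_n_scal_cis (r t : R) (m : nat) :
  pow_n (RtoC r * cis t)%C m = (RtoC (r ^ m) * cis (INR m * t)%R)%C.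
Proof.
  induction m as [|m IH].
  - rewrite Rmult_0_l; unfold cis; rewrite cos_0, sin_0; simpl.
    apply injective_projections; simpl; ring.
  - change (pow_n (RtoC r * cis t)%C (S m)) with ((RtoC r * cis t) * pow_n (RtoC r * cis t) m)%C.
    rewrite IH, S_INR, Rmult_plus_distr_r, Rmult_1_l, Rplus_comm, cis_add; simpl.
    rewrite RtoC_mult; ring.
Qed.

Fixpoint shift_avg (ts : list R) (F : R -> C) (t0 : R) : C :=
  match ts with
  | nil => F t0
  | t :: ts' => ((shift_avg ts' F t0 + shift_avg ts' F (t0 + t)) / 2)%C
  end.

Fixpoint shift_multiplier (ts : list R) (m : nat) : C :=
  match ts with
  | nil => 1%C
  | t :: ts' => ((1 + cis (INR m * t)) / 2 * shift_multiplier ts' m)%C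
  end.

Lemma Cmod_half (z : C) : Cmod (z / 2) = Cmod z / 2.
Proof.
  rewrite Cmod_div, Cmod_R, Rabs_pos_eq; [reflexivity|lra|].
  intro H; apply RtoC_inj in H; lra.
Qed.

Lemma is_series_shift_avg (u : nat -> C) (F : R -> C) (ts : list R) :
  (forall t, is_series (fun m => u m * cis (INR m * t))%C (F t)) ->
  forall t0, is_series (fun m => u m * cis (INR m * t0) * shift_multiplier ts m)%C
                       (shift_avg ts F t0).
Proof.
  intros HF; induction ts as [|t ts IH]; intro t0; simpl.
  - eapply is_series_ext; [|apply HF]; intro m; simpl; ring.
  - pose proof (is_series_scal (/ 2)%C _ _ (is_series_plus _ _ _ _ (IH t0) (IH (t0 + t)))) as H.
    replace ((shift_avg ts F t0 + shift_avg ts F (t0 + t)) / 2)%C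
      with (/ 2 * (shift_avg ts F t0 + shift_avg ts F (t0 + t)))%C by (unfold Cdiv; ring).
    eapply is_series_ext; [|exact H]; intro m; simpl.
    change (scal ?c (plus ?x ?y)) with (c * (x + y))%C.
    rewrite Rmult_plus_distr_l, cis_add; unfold Cdiv; ring.
Qed.

Lemma shift_avg_close (F : R -> C) (w : C) (e : R) (ts : list R) :
  List.Forall (fun t => 0 <= t) ts ->
  forall t0, (forall t, t0 <= t <= t0 + fold_right Rplus 0 ts -> Cmod (F t - w) <= e) ->
  Cmod (shift_avg ts F t0 - w) <= e.
Proof.
  induction 1 as [|t ts Ht Hts IH]; intros t0 HF; simpl in *.
  - apply HF; lra.
  - assert (H1 : Cmod (shift_avg ts F t0 - w) <= e) by (apply IH; intros s Hs; apply HF; lra).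
    assert (H2 : Cmod (shift_avg ts F (t0 + t) - w) <= e) by (apply IH; intros s Hs; apply HF; lra).
    replace ((shift_avg ts F t0 + shift_avg ts F (t0 + t)) / 2 - w)%C
      with (((shift_avg ts F t0 - w) + (shift_avg ts F (t0 + t) - w)) / 2)%C by field.
    rewrite Cmod_half.
    pose proof (Cmod_triangle (shift_avg ts F t0 - w) (shift_avg ts F (t0 + t) - w)); lra.
Qed.

Lemma shift_multiplier_eq0 (ts : list R) (m : nat) (t : R) :
  In t ts -> INR m * t = PI -> shift_multiplier ts m = 0%C.
Proof.
  induction ts as [|t' ts IH]; simpl; [tauto|]; intros [<-|Hin] Hmt.
  - rewrite Hmt, cis_PI; field.
  - rewrite IH by assumption; ring.
Qed.

Lemma Cmod_shift_multiplier_le1 (ts : list R) (m : nat) : Cmod (shift_multiplier ts m) <= 1.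
Proof.
  induction ts as [|t ts IH]; simpl.
  - rewrite Cmod_1; lra.
  - rewrite Cmod_mult, Cmod_half.
    pose proof (Cmod_triangle 1 (cis (INR m * t))) as Htri; rewrite Cmod_1, Cmod_cis in Htri.
    pose proof (Cmod_ge_0 (shift_multiplier ts m)).
    pose proof (Cmod_ge_0 (1 + cis (INR m * t))); nra.
Qed.

Lemma continuous_cis (t : R) : continuous cis t.
Proof.
  apply filterlim_locally; intro eps.
  pose proof (proj1 (filterlim_locally _ _) (continuous_cos t) eps) as Hcos.
  pose proof (proj1 (filterlim_locally _ _) (continuous_sin t) eps) as Hsin.
  apply (filter_imp _ _ (fun z Hz => Hz) (filter_and _ _ Hcos Hsin)).
Qed.

Lemma compact_set_image_interval (g : R -> C) (a b : R) :
  (forall t, continuous g t) -> compact_set (fun z => exists t, a <= t <= b /\ z = g t).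
Proof.
  intros Hg I U HU Hcov.
  destruct (classic (a <= b)) as [Hab|Hba].
  2:{ exists nil; intros z [t [Ht _]]; lra. }
  destruct (Hcov (g a)) as [i0 _]; [exists a; split; [lra|reflexivity]|].
  assert (Hsel : forall t, exists i, a <= t <= b -> U i (g t)).
  { intro t; destruct (classic (a <= t <= b)) as [Ht|Ht].
    - destruct (Hcov (g t)) as [i Hi]; [exists t; auto|]; exists i; auto.
    - exists i0; tauto. }
  destruct (choice _ Hsel) as [sel Hs].
  set (fam_fun := fun t y => a <= t <= b /\ U (sel t) (g y)).
  assert (Hdom : forall t, (exists y, fam_fun t y) -> a <= t <= b)
    by (intros t [y [Ht _]]; exact Ht).
  destruct (compact_P3 a b (mkfamily (fun t => a <= t <= b) fam_fun Hdom)) as [D [HD [l Hl]]].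
  { split.
    - intros t Ht; exists t; split; auto.
    - intros t y [Ht HUy].
      destruct (Hg y _ (HU _ _ HUy)) as [delta Hdelta].
      exists delta; intros z Hz; split; [exact Ht|apply Hdelta, Hz]. }
  exists (map sel l); intros z [t [Ht ->]].
  destruct (HD t Ht) as [y [[Ht' HUy] HDy]].
  exists (sel y); split; [|exact HUy].
  apply in_map, Hl; split; [exact Ht'|exact HDy].
Qed.

Section LacunarySequence.

Variables (n : nat -> nat) (q : R).
Hypothesis q_gt1 : 1 < q.
Hypothesis n_lacunary : forall k, q * INR (n k) <= INR (n (S k)).

Lemma lacunary_lt_succ k : (1 <= n k)%nat -> (n k < n (S k))%nat.
Proof.
  intro Hk; apply INR_lt; apply le_INR in Hk; simpl in Hk.
  pose proof (n_lacunary k); nra.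
Qed.

Lemma lacunary_add_le i d : (1 <= n i)%nat -> (n i + d <= n (i + d))%nat.
Proof.
  intro Hi; induction d as [|d IH]; [rewrite !Nat.add_0_r; lia|].
  replace (i + S d)%nat with (S (i + d)) by lia.
  pose proof (lacunary_lt_succ (i + d) ltac:(lia)); lia.
Qed.

Lemma lacunary_lt i j : (1 <= n i)%nat -> (i < j)%nat -> (n i < n j)%nat.
Proof.
  intros Hi Hij; pose proof (lacunary_add_le i (j - i) Hi).
  replace (i + (j - i))%nat with j in * by lia; lia.
Qed.

Lemma lacunary_index_between k0 N k :
  (1 <= n k0)%nat -> (n k0 <= n k <= n N)%nat -> (k0 <= k <= N)%nat.
Proof.
  intros Hk0 Hk; split.
  - destruct (Nat.lt_ge_cases k k0) as [Hlt|]; [|assumption].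
    pose proof (lacunary_lt k k0 ltac:(lia) Hlt); lia.
  - destruct (Nat.lt_ge_cases N k) as [Hlt|]; [|assumption].
    pose proof (lacunary_lt N k ltac:(lia) Hlt); lia.
Qed.

Definition gap_shifts (k0 N : nat) : list R := map (fun j => PI / INR (n j)) (seq k0 (S N)).

Lemma gap_shifts_nonneg k0 N : (1 <= n k0)%nat -> List.Forall (fun t => 0 <= t) (gap_shifts k0 N).
Proof.
  intro Hk0; apply Forall_forall; intros t Ht.
  apply in_map_iff in Ht; destruct Ht as [j [<- Hj]]; apply in_seq in Hj.
  pose proof (lacunary_add_le k0 (j - k0) Hk0).
  replace (k0 + (j - k0))%nat with j in * by lia.
  apply Rlt_le, Rdiv_lt_0_compat; [exact PI_RGT_0|apply lt_0_INR; lia].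
Qed.

Lemma sum_gap_shifts_le k0 N :
  (1 <= n k0)%nat -> fold_right Rplus 0 (gap_shifts k0 N) <= PI * (q / (q - 1)) / INR (n k0).
Proof.
  assert (Htele : forall len s, (1 <= n s)%nat ->
    fold_right Rplus 0 (map (fun j => PI / INR (n j)) (seq s len))
      + PI * (q / (q - 1)) / INR (n (s + len)) <= PI * (q / (q - 1)) / INR (n s)).
  { induction len as [|len IH]; intros s Hs; simpl; [rewrite Nat.add_0_r; lra|].
    rewrite <- Nat.add_succ_comm.
    pose proof (IH (S s) ltac:(pose proof (lacunary_lt_succ s Hs); lia)) as Hrec.
    (* [PI / x + c PI / y <= c PI / x] when [y >= q x], precisely because [c = q / (q - 1)] *)
    set (x := INR (n s)) in *; set (y := INR (n (S s))) in *.
    assert (Hx : 1 <= x) by (apply le_INR in Hs; exact Hs).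
    pose proof (n_lacunary s) as Hy; fold x y in Hy.
    pose proof PI_RGT_0.
    assert (PI * (q / (q - 1)) / y <= PI * (q / (q - 1)) / (q * x)).
    { apply Rmult_le_compat_l; [apply Rmult_le_pos; [lra|apply Rlt_le, Rdiv_lt_0_compat; lra]|].
      apply Rinv_le_contravar; nra. }
    assert (PI * (q / (q - 1)) / (q * x) = PI * (q / (q - 1)) / x - PI / x)
      by (field; repeat split; lra).
    lra. }
  intro Hk0; pose proof (Htele (S N) k0 Hk0) as H; unfold gap_shifts.
  assert (0 <= PI * (q / (q - 1)) / INR (n (k0 + S N))); [|lra].
  apply Rmult_le_pos.
  { apply Rmult_le_pos; [pose proof PI_RGT_0; lra|apply Rlt_le, Rdiv_lt_0_compat; lra]. }
  apply Rlt_le, Rinv_0_lt_compat, lt_0_INR; pose proof (lacunary_add_le k0 (S N) Hk0); lia.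
Qed.

Lemma gap_shifts_kill (a : nat -> C) :
  (forall j, (forall k, n k <> j) -> a j = 0%C) ->
  forall k0 N m, (1 <= n k0)%nat -> (n k0 <= m <= n (k0 + N))%nat ->
  (a m * shift_multiplier (gap_shifts k0 N) m)%C = 0%C.
Proof.
  intros Hgap k0 N m Hk0 Hm.
  destruct (classic (exists k, n k = m)) as [[k <-]|Hno].
  - pose proof (lacunary_index_between k0 (k0 + N) k Hk0 Hm) as Hk.
    rewrite (shift_multiplier_eq0 _ (n k) (PI / INR (n k))); [ring| |].
    + apply (in_map (fun j => PI / INR (n j))), in_seq; lia.
    + field; apply not_0_INR; lia.
  - rewrite Hgap by (intros k Hk; apply Hno; exists k; exact Hk); ring.
Qed.

Lemma lacunary_large_index :
  (exists k, (1 <= n k)%nat) -> exists k0, (1 <= n k0)%nat /\ q / (q - 1) <= INR (n k0).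
Proof.
  intros [k1 Hk1].
  destruct (INR_archimed 1 (q / (q - 1)) Rlt_0_1) as [d Hd]; rewrite Rmult_1_r in Hd.
  pose proof (lacunary_add_le k1 d Hk1) as Hk.
  exists (k1 + d)%nat; split; [lia|].
  apply le_INR in Hk; rewrite plus_INR in Hk; apply le_INR in Hk1; simpl in Hk1; lra.
Qed.

End LacunarySequence.

Lemma hadamard_vanishing_blocks (a : nat -> C) (n : nat -> nat) (q : R) :
  1 < q -> (forall k, q * INR (n k) <= INR (n (S k))) ->
  (forall j, (forall k, n k <> j) -> a j = 0%C) ->
  exists l, forall p0, exists ts p, (l <= p)%nat /\ (p0 <= p)%nat /\
    List.Forall (fun t => 0 <= t) ts /\ fold_right Rplus 0 ts <= PI /\
    forall m, (l < m <= p)%nat -> (a m * shift_multiplier ts m)%C = 0%C.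
Proof.
  intros Hq Hn Hgap.
  destruct (classic (exists k, (1 <= n k)%nat)) as [Hpos|Hzero].
  - destruct (lacunary_large_index n q Hq Hn Hpos) as [k0 [Hk0 Hlarge]].
    exists (pred (n k0)); intro p0.
    exists (gap_shifts n k0 p0), (n (k0 + p0)%nat).
    pose proof (lacunary_add_le n q Hq Hn k0 p0 Hk0).
    repeat split; try lia.
    + exact (gap_shifts_nonneg n q Hq Hn k0 p0 Hk0).
    + eapply Rle_trans; [exact (sum_gap_shifts_le n q Hq Hn k0 p0 Hk0)|].
      assert (Hx : 0 < INR (n k0)) by (apply lt_0_INR; lia).
      apply Rmult_le_reg_r with (INR (n k0)); [exact Hx|].
      replace (PI * (q / (q - 1)) / INR (n k0) * INR (n k0)) with (PI * (q / (q - 1)))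
        by (field; lra).
      pose proof PI_RGT_0; nra.
    + intros m Hm; apply (gap_shifts_kill n q Hq Hn a Hgap); lia.
  - exists 0%nat; intro p0; exists nil, p0.
    repeat split; try lia; [constructor|simpl; pose proof PI_RGT_0; lra|].
    intros m Hm; rewrite Hgap; [ring|].
    intros k Hk; apply Hzero; exists k; lia.
Qed.

Lemma Cmod_is_series_le (v : nat -> C) (z : C) (N : nat) (c : R) :
  is_series v z -> (forall K, (N <= K)%nat -> Cmod (sum_n v K) <= c) -> Cmod z <= c.
Proof.
  intros Hv Hc.
  assert (Hlim : is_lim_seq (fun K => Cmod (sum_n v K)) (Cmod z))
    by (eapply filterlim_comp; [exact Hv|exact (filterlim_norm (V := C_NormedModule) z)]).
  exact (is_lim_seq_le_loc _ (fun _ => c) _ _ (ex_intro _ N Hc) Hlim (is_lim_seq_const c)).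
Qed.

Lemma Cmod_series_vanishing_block_le (v : nat -> C) (w : nat -> R) (z : C) (l p : nat) (B e : R) :
  is_series v z -> (l <= p)%nat ->
  (forall m, (l < m <= p)%nat -> v m = 0%C) ->
  (forall m, Cmod (v m) <= w m) ->
  sum_n w l <= B ->
  (forall K, (p < K)%nat -> sum_n_m w (S p) K <= e) ->
  Cmod z <= B + e.
Proof.
  intros Hv Hlp Hblock Hvw Hhead Htail.
  apply (Cmod_is_series_le v z (S p)); [exact Hv|]; intros K HK.
  unfold sum_n; rewrite (sum_n_m_Chasles v 0 l K), (sum_n_m_Chasles v (S l) p K) by lia.
  rewrite (sum_n_m_ext_loc v (fun _ => zero) (S l) p) by (intros m Hm; apply Hblock; lia).
  rewrite sum_n_m_const_zero, plus_zero_l.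
  eapply Rle_trans; [apply Cmod_triangle|]; apply Rplus_le_compat.
  - eapply Rle_trans; [apply (norm_sum_n_m (V := C_NormedModule))|].
    eapply Rle_trans; [apply sum_n_m_le, Hvw|exact Hhead].
  - eapply Rle_trans; [apply (norm_sum_n_m (V := C_NormedModule))|].
    eapply Rle_trans; [apply sum_n_m_le, Hvw|apply Htail; lia].
Qed.

Lemma abel_universal_const_on_half_circle (f : C -> C) :
  abel_universal f -> forall M : C,
  exists r, 0 <= r < 1 /\ forall t, 0 <= t <= PI -> Cmod (f (RtoC r * cis t)%C - M) <= 1.
Proof.
  intros Habel M.
  destruct (Habel 1 Rlt_0_1 (fun z => exists t, 0 <= t <= PI /\ z = cis t))
    with (phi := fun _ : C => M)
    as [r [Hr Happrox]].
  - intros z [t [_ ->]]; apply Cmod_cis.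
  - exact (compact_set_image_interval cis 0 PI continuous_cis).
  - exists (- Ci)%C; split; [unfold unit_circle; rewrite Cmod_opp; exact Cmod_Ci|].
    intros [t [Ht Heq]]; apply (f_equal snd) in Heq; simpl in Heq.
    pose proof (sin_ge_0 t (proj1 Ht) (proj2 Ht)); lra.
  - intros z _ eps Heps; exists 1; split; [lra|]; intros.
    replace (M - M)%C with (RtoC 0) by ring; rewrite Cmod_0; exact Heps.
  - exists r; split; [exact Hr|]; intros t Ht; apply Happrox; exists t; auto.
Qed.

Lemma is_series_on_circle (a : nat -> C) (f : C -> C) (r : R) :
  power_series_on_disc a f -> 0 <= r < 1 ->
  forall t, is_series (fun m => a m * RtoC (r ^ m) * cis (INR m * t))%C (f (RtoC r * cis t)%C).
Proof.
  intros Hf Hr t; eapply is_series_ext; [|apply Hf].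
  - intro m; simpl; rewrite pow_n_scal_cis; ring.
  - unfold unit_disc; rewrite Cmod_mult, Cmod_R, Cmod_cis, Rabs_pos_eq; lra.
Qed.

Lemma ex_series_radius_one (a : nat -> C) (r : R) :
  radius_of_convergence a = Finite 1 -> 0 <= r < 1 -> ex_series (fun m => Cmod (a m) * r ^ m).
Proof.
  intros Hrad Hr; eapply ex_series_ext; [|apply (CV_disk_inside (fun k => Cmod (a k)) r)].
  - intro m; apply Rabs_pos_eq, Rmult_le_pos; [apply Cmod_ge_0|apply pow_le; lra].
  - unfold radius_of_convergence in Hrad; rewrite Hrad; simpl; rewrite Rabs_pos_eq; lra.
Qed.

Lemma Cmod_shift_avg_on_circle_le (a : nat -> C) (f : C -> C) (r : R) (ts : list R)
    (l p : nat) (e : R) :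
  power_series_on_disc a f -> 0 <= r < 1 -> (l <= p)%nat ->
  (forall m, (l < m <= p)%nat -> (a m * shift_multiplier ts m)%C = 0%C) ->
  (forall K, (p < K)%nat -> sum_n_m (fun m => Cmod (a m) * r ^ m) (S p) K <= e) ->
  Cmod (shift_avg ts (fun t => f (RtoC r * cis t)%C) 0) <= sum_n (fun m => Cmod (a m)) l + e.
Proof.
  intros Hf Hr Hlp Hkill Htail.
  apply (Cmod_series_vanishing_block_le _ (fun m => Cmod (a m) * r ^ m) _ l p _ e
           (is_series_shift_avg _ _ ts (is_series_on_circle a f r Hf Hr) 0) Hlp);
    [| | |exact Htail].
  - intros m Hm; transitivity (a m * shift_multiplier ts m * (RtoC (r ^ m) * cis (INR m * 0)))%C;
      [ring|rewrite Hkill by lia; ring].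
  - intro m; rewrite !Cmod_mult, Cmod_R, Cmod_cis, Rabs_pos_eq by (apply pow_le; lra).
    pose proof (Cmod_shift_multiplier_le1 ts m).
    pose proof (Rmult_le_pos _ _ (Cmod_ge_0 (a m)) (pow_le r m (proj1 Hr))); nra.
  - apply sum_n_m_le; intro m.
    pose proof (pow_incr r 1 m (conj (proj1 Hr) (Rlt_le _ _ (proj2 Hr)))); rewrite pow1 in *.
    pose proof (Cmod_ge_0 (a m)); nra.
Qed.

Theorem corollary4p4 :
  forall (a : nat -> C) (f : C -> C),
    power_series_on_disc a f ->
    hadamard_gaps a ->
    ~ abel_universal f.
Proof.
  intros a f Hf [Hrad [n [q [Hq [Hn Hgap]]]]] Habel.
  destruct (hadamard_vanishing_blocks a n q Hq Hn Hgap) as [l Hblocks].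
  set (B := sum_n (fun m => Cmod (a m)) l).
  destruct (abel_universal_const_on_half_circle f Habel (RtoC (B + 2))) as [r [Hr Happrox]].
  destruct (Cauchy_ex_series _ (ex_series_radius_one a r Hrad Hr) (mkposreal (/ 2) ltac:(lra)))
    as [N Htail].
  destruct (Hblocks N) as [ts [p [Hlp [HNp [Hts [Hsum Hkill]]]]]].
  set (avg := shift_avg ts (fun t => f (RtoC r * cis t)%C) 0).
  assert (Hclose : Cmod (avg - RtoC (B + 2)) <= 1)
    by (apply shift_avg_close; [exact Hts|intros t Ht; apply Happrox; lra]).
  assert (Hsmall : Cmod avg <= B + / 2).
  { apply (Cmod_shift_avg_on_circle_le a f r ts l p); auto.
    intros K HK; eapply Rle_trans; [apply Rle_abs|apply Rlt_le, (Htail (S p) K); lia]. }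
  assert (Htri : Cmod (RtoC (B + 2)) <= Cmod (- (avg - RtoC (B + 2))) + Cmod avg).
  { replace (RtoC (B + 2)) with (- (avg - RtoC (B + 2)) + avg)%C at 1 by ring.
    apply Cmod_triangle. }
  rewrite Cmod_opp, Cmod_R in Htri; pose proof (Rle_abs (B + 2)); lra.
Qed.
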